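(* Let $N$ be a positive integer (the input size) and let $M = N^{O(1)}$ be a positive integer (the input range). Then there exists a one-layer transformer with a single head of sum-of-determinants $2$-simplicial attention (defined in the context) with attention head dimension $d = 7$ such that for every input $X = (x_1,\dots,x_N) \in [M]^N$ and every $i \in \{1,\dots,N\}$, the transformer's output at position $i$ equals $1$ if there exist $j_1, j_2 \in \{1,\dots,N\}$ with $x_i + x_{j_1} + x_{j_2} \equiv 0 \pmod M$, and equals $0$ otherwise.
   Context: $[M]=\{0,1,\dots,M-1\}$ (residues mod $M$). The transformer model class: each input element $x_j$ is mapped by an input MLP $\phi$ to an embedding $\phi(x_j)$; linear maps $Q, K, K'$ produce the query ${\bm q}_i = Q\phi(x_i)\in\mathbb{R}^d$ and keys ${\bm k}_{j} = K\phi(x_{j})$, ${\bm k}'_{j} = K'\phi(x_{j})$, and linear maps $V, V'$ produce values ${\bm v}_j = V\phi(x_j)$, ${\bm v}'_j = V'\phi(x_j)$. For a vector ${\bm u}$, write ${\bm u}^{(l)}$ for its $l$-th consecutive block of $3$ coordinates (coordinates $3(l-1)+1,\dots,3l$). The attention logit for query position $i$ and key pair $(j_1,j_2)$ is the sum-of-determinants trilinear form $A_{i j_1 j_2} = \sum_{l} \det\big([{\bm q}_i^{(l)}, {\bm k}_{j_1}^{(l)}, {{\bm k}'_{j_2}}^{(l)}]\big)$ over the complete $3$-coordinate blocks (for $d=7$, blocks $l=1,2$), where $[\cdot,\cdot,\cdot]$ stacks the three $3$-vectors into a $3\times 3$ matrix. Attention weights are the softmax of the logits over all pairs $(j_1,j_2)$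 (and, as in the standard Match-type constructions, over an additional designated ''blank'' pair whose logit is ${\bm q}_i\cdot{\bm k}_{\mathrm{blank}}$ for a fixed key vector ${\bm k}_{\mathrm{blank}}\in\mathbb{R}^d$ and whose value is a fixed vector), and the attention output at position $i$ is $\sum_{j_1,j_2} S_{i j_1 j_2}\,({\bm v}_{j_1}\circ {\bm v}'_{j_2})$ plus the blank pair's weighted value, where $\circ$ is the elementwise product. The final output at position $i$ is an output MLP $\psi$ applied to the attention output. *)

From HB Require Import structures.
From mathcomp Require Import all_boot all_order all_algebra.
From mathcomp Require Import reals sequences exp.
Set Implicit Arguments. Unset Strict Implicit. Unset Printing Implicit Defensive.
Import Order.TTheory GRing.Theory Num.Theory.
Local Open Scope ring_scope.

Section Transformer.
Variable R : realType.

Definition relu (x : R) : R := Num.max x 0.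

Inductive is_mlp : forall a b : nat, ('rV[R]_a -> 'rV[R]_b) -> Prop :=
| mlp_affine a b (W : 'M[R]_(a, b)) (c : 'rV[R]_b) :
    is_mlp (fun v => v *m W + c)
| mlp_layer a h b (W : 'M[R]_(a, h)) (c : 'rV[R]_h) (g : 'rV[R]_h -> 'rV[R]_b) :
    is_mlp g -> is_mlp (fun v => g (map_mx relu (v *m W + c))).

(* k-th coordinate (0-based) of a row vector, 0 if out of range *)
Definition coord d (u : 'rV[R]_d) (k : nat) : R :=
  \sum_(j < d | val j == k) u 0 j.

Definition blk d (u : 'rV[R]_d) (l : nat) (r : 'I_3) : R := coord u (3 * l + r).

Definition mx3 (a b c : 'I_3 -> R) : 'M[R]_3 :=
  \matrix_(r < 3, s < 3) (if s == 0 :> nat then a r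
                         else if s == 1 :> nat then b r else c r).

Definition sodet d (q k k' : 'rV[R]_d) : R :=
  \sum_(l < d %/ 3) \det (mx3 (blk q l) (blk k l) (blk k' l)).

Definition dotv d (u v : 'rV[R]_d) : R := \sum_(k < d) u 0 k * v 0 k.

Definition hadamard d (u v : 'rV[R]_d) : 'rV[R]_d := \row_k (u 0 k * v 0 k).

Record transformer (d : nat) := Transformer {
  emb : nat;
  phi : 'rV[R]_1 -> 'rV[R]_emb;
  phi_mlp : is_mlp phi;
  Qm : 'M[R]_(emb, d);
  Km : 'M[R]_(emb, d);
  K'm : 'M[R]_(emb, d);
  Vm : 'M[R]_(emb, d);
  V'm : 'M[R]_(emb, d);
  k_blank : 'rV[R]_d;
  v_blank : 'rV[R]_d;
  psi : 'rV[R]_d -> 'rV[R]_1;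
  psi_mlp : is_mlp psi }.

Variables (d : nat) (T : transformer d) (N : nat) (x : 'I_N -> nat).

Definition embed (j : 'I_N) : 'rV[R]_(emb T) := phi T (\row_(_ < 1) (x j)%:R).
Definition query j := embed j *m Qm T.
Definition key j := embed j *m Km T.
Definition key' j := embed j *m K'm T.
Definition val1 j := embed j *m Vm T.
Definition val2 j := embed j *m V'm T.

Definition logit (i j1 j2 : 'I_N) : R := sodet (query i) (key j1) (key' j2).
Definition blank_logit (i : 'I_N) : R := dotv (query i) (k_blank T).

Definition partition (i : 'I_N) : R :=
  \sum_(j1 < N) \sum_(j2 < N) expR (logit i j1 j2) + expR (blank_logit i).

Definition attn_out (i : 'I_N) : 'rV[R]_d :=
  \sum_(j1 < N) \sum_(j2 < N)
      (expR (logit i j1 j2) / partition i) *: hadamard (val1 j1) (val2 j2)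
  + (expR (blank_logit i) / partition i) *: v_blank T.

Definition tf_output (i : 'I_N) : R := psi T (attn_out i) 0 0.

End Transformer.

From Pilot Require Import Defs.
From HB Require Import structures.
From mathcomp Require Import all_boot all_order all_algebra.
From mathcomp Require Import reals sequences exp trigo.
From mathcomp Require Import ring lra zify.
Set Implicit Arguments. Unset Strict Implicit. Unset Printing Implicit Defensive.
Import Order.TTheory GRing.Theory Num.Theory.
Local Open Scope ring_scope.

(* Encode a residue x as the angle 2πx/M. With the query along the third axis
   of each 3-block, a block determinant is a planar cross product, and the two
   blocks add up to the logit λ cos(2π(x_i + x_j1 + x_j2)/M): exactly λ when the
   triple sums to 0 mod M, and at most λ(1 - e) otherwise, where e > 0 is the
   least value of 1 - cos(2πr/M) over 0 < r < M.  All values are zero, so the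
   output only reads the softmax weight of the blank pair, whose logit is λ - μ.
   For μ = 4N² and λ = 2μ/e this weight is at most exp(-μ) <= 1/4 when a
   zero-sum triple exists and at least 1/(1 + N² exp(-μ)) >= 4/5 otherwise, and
   a two-unit ReLU step maps it to 1 or 0. *)

Section RootAngle.
Variable R : realType.

Lemma finite_pos_lbound (P : pred nat) (f : nat -> R) K :
  (forall s, (s < K)%N -> P s -> 0 < f s) ->
  exists2 e, 0 < e & forall s, (s < K)%N -> P s -> e <= f s.
Proof.
elim: K => [|K IHK] f_gt0; first by exists 1.
have [|e e_gt0 f_ge] := IHK; first by move=> s s_ltK; apply: f_gt0; lia.
case PK: (P K).
- exists (Num.min e (f K)); first by rewrite lt_min e_gt0 f_gt0.
  move=> s; rewrite ltnS leq_eqVlt => /orP[/eqP -> _|s_ltK Ps].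
  + by rewrite ge_min lexx orbT.
  + by rewrite ge_min f_ge.
- exists e => // s; rewrite ltnS leq_eqVlt => /orP[/eqP -> |]; first by rewrite PK.
  exact: f_ge.
Qed.

Definition root_angle (M : nat) : R := pi *+ 2 / M%:R.

Lemma cos_root_angle_mod M s : (0 < M)%N ->
  cos (s%:R * root_angle M) = cos ((s %% M)%:R * root_angle M).
Proof.
move=> M_gt0; have M_neq0 : (M%:R : R) != 0 by rewrite pnatr_eq0 -lt0n.
rewrite {1}(divn_eq s M) natrD mulrDl addrC.
suff -> : (s %/ M * M)%:R * root_angle M = (pi *+ 2) *+ (s %/ M).
  exact: (periodicn (@cosD2pi R) (s %/ M)).
by rewrite /root_angle natrM -mulr_natl; field.
Qed.

Lemma cos_root_angle_dvd M s : (0 < M)%N -> (M %| s)%N ->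
  cos (s%:R * root_angle M) = 1.
Proof. by move=> M_gt0 /eqP dvd; rewrite cos_root_angle_mod // dvd mul0r cos0. Qed.

Lemma cos_lt1 (y : R) : 0 < y < pi *+ 2 -> cos y < 1.
Proof.
move=> /andP[y_gt0 y_lt2pi]; have pi_gt0 := pi_gt0 R.
have cos_lt1_half (z : R) : 0 < z <= pi -> cos z < 1.
  move=> /andP[z_gt0 z_lepi]; rewrite -cos0.
  by rewrite ltr_cos // in_itv /= ?lexx ?(ltW pi_gt0) ?(ltW z_gt0).
case: (lerP y pi) => [y_lepi|pi_lty]; first by apply: cos_lt1_half; rewrite y_gt0.
rewrite -cosN -(cosD2pi (- y)).
by apply: cos_lt1_half; rewrite mulr2n; apply/andP; split; lra.
Qed.

Lemma cos_root_angle_lt1 M r : (0 < r < M)%N -> cos (r%:R * root_angle M) < 1.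
Proof.
move=> /andP[r_gt0 r_ltM]; have M_gt0 : (0 < M%:R :> R) by rewrite ltr0n; lia.
have two_pi_gt0 : (0 : R) < pi *+ 2 by rewrite mulrn_wgt0 ?pi_gt0.
apply: cos_lt1; rewrite /root_angle mulrA ltr_pdivrMr //.
rewrite divr_gt0 ?mulr_gt0 ?ltr0n //=; last by lia.
by rewrite [_ * M%:R]mulrC ltr_pM2r // ltr_nat.
Qed.

Lemma cos_root_angle_gap M : (0 < M)%N ->
  exists2 e, 0 < e & forall s, ~~ (M %| s)%N -> cos (s%:R * root_angle M) <= 1 - e.
Proof.
move=> M_gt0.
have [|e e_gt0 gap] := @finite_pos_lbound (fun r => 0 < r)%N
    (fun r => 1 - cos (r%:R * root_angle M)) M.
  by move=> r r_ltM r_gt0; rewrite subr_gt0 cos_root_angle_lt1 ?r_gt0.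
exists e => // s s_ndvd; rewrite cos_root_angle_mod //.
have := gap (s %% M)%N; rewrite ltn_mod M_gt0 lt0n -/(dvdn M s) s_ndvd.
by move=> /(_ isT isT); lra.
Qed.

End RootAngle.

Arguments root_angle {R} M.

Section BlankWeight.
Variables (R : realType) (I : finType) (L : I -> R) (tau mu : R).

Definition blank_weight := expR tau / (\sum_i expR (L i) + expR tau).

Let Z := \sum_i expR (L i) + expR tau.

Let Z_gt0 : 0 < Z.
Proof. by rewrite /Z ltr_pwDr ?expR_gt0 ?sumr_ge0 // => i _; apply: expR_ge0. Qed.

Lemma blank_weight_le p : tau + mu <= L p -> blank_weight <= expR (- mu).
Proof.
rewrite /blank_weight -/Z => Lp_ge.
have Z_ge : expR (tau + mu) <= Z.
  rewrite /Z ler_wpDr ?expR_ge0 // (bigD1 p) //= ler_wpDr ?ler_expR //.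
  by rewrite sumr_ge0 // => i _; apply: expR_ge0.
have -> : expR tau = expR (- mu) * expR (tau + mu) by rewrite -expRD; congr expR; ring.
by rewrite ler_pdivrMr // ler_wpM2l ?expR_ge0.
Qed.

Lemma blank_weight_ge : (forall i, L i <= tau - mu) ->
  (1 + #|I|%:R * expR (- mu))^-1 <= blank_weight.
Proof.
rewrite /blank_weight -/Z => L_le; set c := 1 + _.
have c_gt0 : 0 < c by rewrite /c ltr_pwDl ?mulr_ge0 ?expR_ge0.
have Z_le : Z <= expR tau * c.
  have -> : expR tau * c = (expR (tau - mu)) *+ #|I| + expR tau.
    by rewrite /c mulrDr mulr1 mulrCA -expRD mulr_natl addrC.
  by rewrite /Z lerD // -sumr_const ler_sum // => i _; rewrite ler_expR.
rewrite ler_pdivlMr //; apply: le_trans (ler_wpM2l _ Z_le) _.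
  by rewrite invr_ge0 ltW.
by rewrite mulrCA mulVf ?mulr1 ?gt_eqF.
Qed.

End BlankWeight.

Lemma natr_mul_expRN4_le (R : realType) n : n%:R * expR (- (4 * n%:R)) <= 1 / 4 :> R.
Proof.
have e_gt0 := expR_gt0 (4 * n%:R : R).
have := expR_ge1Dx (4 * n%:R : R).
by rewrite expRN ler_pdivrMr //; lra.
Qed.

Section ReluNetworks.
Variable R : realType.

Lemma relu_id (y : R) : 0 <= y -> relu y = y.
Proof. by move=> y_ge0; rewrite /relu max_l. Qed.

Lemma relu_eq0 (y : R) : y <= 0 -> relu y = 0.
Proof. by move=> y_le0; rewrite /relu max_r. Qed.

Lemma relu_hat (z : int) :
  relu (z%:~R + 1) - 2 * relu z%:~R + relu (z%:~R - 1) = (z == 0)%:R :> R.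
Proof.
have [z_lt0|z_gt0|->] := ltgtP z 0; last by rewrite relu_id ?relu_eq0 /=; lra.
- have : (1 : R) <= (- z)%:~R by rewrite ler1z; lia.
  by rewrite intrN => z_le; rewrite !relu_eq0 //=; lra.
- have : (1 : R) <= z%:~R by rewrite ler1z; lia.
  by move=> z_ge; rewrite !relu_id //=; lra.
Qed.

Lemma sum_delta n m (F : nat -> R) : (m < n)%N ->
  \sum_(j < n) F j * (j == m :> nat)%:R = F m.
Proof.
move=> m_ltn; rewrite (bigD1 (Ordinal m_ltn)) //= eqxx mulr1 big1 ?addr0 //.
by move=> j /negbTE j_neq; rewrite -val_eqE /= in j_neq; rewrite j_neq mulr0.
Qed.

Definition hat_mx M : 'M[R]_(M.+2, M) := \matrix_(j, k)
  ((j == k :> nat)%:R - 2 * (j == k.+1 :> nat)%:R + (j == k.+2 :> nat)%:R).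

(* The trailing [+ 0], here and in [threshold], makes the output layer
   literally an [mlp_affine] layer. *)
Definition onehot M (v : 'rV[R]_1) : 'rV[R]_M :=
  map_mx (@relu R) (v *m const_mx 1 + \row_(j < M.+2) (1 - j%:R)) *m hat_mx M + 0.

Lemma onehot_mlp M : is_mlp (onehot M).
Proof. exact: mlp_layer (mlp_affine _ _). Qed.

Lemma onehotE M (n : 'I_M) : onehot M (\row_(_ < 1) n%:R) = delta_mx 0 n.
Proof.
apply/rowP => k; rewrite !mxE.
pose F (m : nat) := relu ((n : nat)%:R + (1 - m%:R) : R).
transitivity (F k - 2 * F k.+1 + F k.+2).
  rewrite (eq_bigr (fun j : 'I_M.+2 => F j * (j == k :> nat)%:R
      - 2 * (F j * (j == k.+1 :> nat)%:R) + F j * (j == k.+2 :> nat)%:R)).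
    by rewrite !big_split /= sumrN -mulr_sumr !sum_delta ?addr0 //; have := ltn_ord k; lia.
  by move=> j _; rewrite !mxE big_ord1 !mxE mulr1 /F; ring.
set z : int := n%:Z - k%:Z.
have -> : F k = relu (z%:~R + 1) by rewrite /F /z; congr relu; ring.
have -> : F k.+1 = relu z%:~R by rewrite /F /z; congr relu; ring.
have -> : F k.+2 = relu (z%:~R - 1) by rewrite /F /z; congr relu; ring.
by rewrite relu_hat /z subr_eq0 eqz_nat eq_sym -val_eqE.
Qed.

Definition threshold d (v : 'rV[R]_d.+1) : 'rV[R]_1 :=
  map_mx (@relu R) (v *m \matrix_(i < d.+1, j < 2) (if i == 0 :> nat then -2 else 0)
                    + \row_(j < 2) (if j == 0 :> nat then 3 / 2 else 1 / 2))
  *m \matrix_(j < 2, _ < 1) (if j == 0 :> nat then 1 else -1) + 0.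

Lemma threshold_mlp d : is_mlp (@threshold d).
Proof. exact: mlp_layer (mlp_affine _ _). Qed.

Lemma thresholdE d (v : 'rV[R]_d.+1) :
  threshold v 0 0 = relu (v 0 0 * -2 + 3 / 2) - relu (v 0 0 * -2 + 1 / 2).
Proof.
rewrite !mxE !big_ord_recr big_ord0 /= !mxE !big_ord_recl /= !mxE /=.
rewrite !big1 => [|i _|i _]; rewrite ?mxE //= ?mulr0 //.
by rewrite !addr0 add0r mulr1 mulrN1.
Qed.

Lemma threshold_low d (v : 'rV[R]_d.+1) : v 0 0 <= 1 / 4 -> threshold v 0 0 = 1.
Proof. by move=> v_le; rewrite thresholdE !relu_id; lra. Qed.

Lemma threshold_high d (v : 'rV[R]_d.+1) : 3 / 4 <= v 0 0 -> threshold v 0 0 = 0.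
Proof. by move=> v_ge; rewrite thresholdE !relu_eq0; lra. Qed.

End ReluNetworks.

Lemma det_mx3_nat (R : comPzRingType) (g : nat -> nat -> R) :
  \det (\matrix_(i < 3, j < 3) g i j) =
    g 0 0 * (g 1 1 * g 2 2 - g 1 2 * g 2 1)
  - g 0 1 * (g 1 0 * g 2 2 - g 1 2 * g 2 0)
  + g 0 2 * (g 1 0 * g 2 1 - g 1 1 * g 2 0).
Proof.
rewrite (expand_det_row _ ord0) !big_ord_recr big_ord0 /= /cofactor /=.
rewrite !(expand_det_row _ ord0) !big_ord_recr big_ord0 /= /cofactor /=.
by rewrite !big_ord0 !det_mx11 !mxE /= /bump /=; ring.
Qed.

Section RotationAttention.
Variable R : realType.

Lemma coord_row d (f : nat -> R) k : (k < d)%N -> Defs.coord (\row_(j < d) f j) k = f k.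
Proof. by move=> k_lt; rewrite /Defs.coord (big_pred1 (Ordinal k_lt)) ?mxE. Qed.

Lemma det_mx3_blk d (q u w : 'rV[R]_d) l :
  let a n := Defs.coord q (3 * l + n) in
  let b n := Defs.coord u (3 * l + n) in
  let c n := Defs.coord w (3 * l + n) in
  \det (mx3 (blk q l) (blk u l) (blk w l)) =
    a 0 * (b 1 * c 2 - c 1 * b 2) - b 0 * (a 1 * c 2 - c 1 * a 2)
  + c 0 * (a 1 * b 2 - b 1 * a 2).
Proof.
exact: (det_mx3_nat (fun n m => if m == 0 then Defs.coord q (3 * l + n)
  else if m == 1 then Defs.coord u (3 * l + n) else Defs.coord w (3 * l + n))).
Qed.

Definition rot_query (lam a : R) : 'rV[R]_7 :=
  \row_j [:: 0; 0; lam * sin a; 0; 0; lam * cos a; 1]`_j.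
Definition rot_key (b : R) : 'rV[R]_7 :=
  \row_j [:: cos b; sin b; 0; cos b; sin b; 0; 0]`_j.
Definition rot_key' (c : R) : 'rV[R]_7 :=
  \row_j [:: cos c; - sin c; 0; sin c; cos c; 0; 0]`_j.
Definition blank_key (tau : R) : 'rV[R]_7 := \row_j [:: 0; 0; 0; 0; 0; 0; tau]`_j.

Lemma sodet_rot lam a b c :
  sodet (rot_query lam a) (rot_key b) (rot_key' c) = lam * cos (a + b + c).
Proof.
rewrite /sodet; change (7 %/ 3)%N with 2%N.
rewrite big_ord_recr big_ord1 /= !det_mx3_blk /= !coord_row //= !cosD !sinD.
ring.
Qed.

Lemma dotv_rot_blank lam a tau : dotv (rot_query lam a) (blank_key tau) = tau.
Proof. by rewrite /dotv !big_ord_recr big_ord0 /= !mxE /=; ring. Qed.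

End RotationAttention.

Lemma attn_out_value0 (R : realType) d (T : transformer R d) N (x : 'I_N -> nat) i :
  Vm T = 0 -> attn_out T x i = (expR (blank_logit T x i) / Defs.partition T x i) *: v_blank T.
Proof.
move=> V0; rewrite /attn_out big1 ?add0r // => j1 _; rewrite big1 // => j2 _.
have -> : hadamard (Defs.val1 T x j1) (Defs.val2 T x j2) = 0.
  by apply/rowP => k; rewrite /Defs.val1 V0 mulmx0 !mxE mul0r.
exact: scaler0.
Qed.

Section SumTransformer.
Variables (R : realType) (M : nat) (lam tau : R).

Definition three_sum_tf : transformer R 7 :=
  @Transformer R 7 M (onehot M) (onehot_mlp R M)
    (\matrix_(a < M) rot_query lam (a%:R * root_angle M))
    (\matrix_(b < M) rot_key (b%:R * root_angle M))
    (\matrix_(c < M) rot_key' (c%:R * root_angle M))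
    0 0 (blank_key tau) (delta_mx 0 0) (@threshold R 6) (threshold_mlp R 6).

Variables (N : nat) (x : 'I_N -> 'I_M).

Let xs j := val (x j).

Lemma embed_three_sum_tf (u : 'I_M -> 'rV[R]_7) i :
  embed three_sum_tf xs i *m \matrix_a u a = u (x i).
Proof. by rewrite /embed /= onehotE -rowE rowK. Qed.

Lemma logit_three_sum_tf i j1 j2 :
  logit three_sum_tf xs i j1 j2 = lam * cos ((x i + x j1 + x j2)%:R * root_angle M).
Proof. by rewrite /logit /query /key /key' !embed_three_sum_tf sodet_rot !natrD !mulrDl. Qed.

Lemma blank_logit_three_sum_tf i : blank_logit three_sum_tf xs i = tau.
Proof. by rewrite /blank_logit /query embed_three_sum_tf dotv_rot_blank. Qed.

Lemma tf_output_three_sum_tf i :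
  tf_output three_sum_tf xs i = @threshold R 6 (blank_weight
    (fun p : 'I_N * 'I_N => lam * cos ((x i + x p.1 + x p.2)%:R * root_angle M))
    tau *: delta_mx 0 0) 0 0.
Proof.
rewrite /tf_output attn_out_value0 //= /Defs.partition !blank_logit_three_sum_tf pair_bigA.
by under eq_bigr => p _ do rewrite logit_three_sum_tf.
Qed.

End SumTransformer.

Theorem theorem1 (R : realType) (c N M : nat) :
  (0 < N)%N -> (0 < M)%N -> (M <= N ^ c)%N ->
  exists T : transformer R 7,
    forall (x : 'I_N -> 'I_M) (i : 'I_N),
      tf_output T (fun j => val (x j)) i =
      (if [exists j1 : 'I_N, exists j2 : 'I_N,
             (x i + x j1 + x j2) %% M == 0]%N
       then 1 else 0).
Proof.
move=> N_gt0 M_gt0 _.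
have [e e_gt0 cos_gap] := cos_root_angle_gap R M_gt0.
set mu : R := 4 * (N * N)%:R; set lam := 2 * mu / e.
have lam_ge0 : 0 <= lam by rewrite divr_ge0 ?mulr_ge0 // ltW.
(* A logit off the zero class loses λe = 2μ, so the blank logit λ - μ is μ
   below the logit of a zero-sum triple and μ above every other logit. *)
have lam_e : lam * e = 2 * mu by rewrite mulrVK ?unitfE ?gt_eqF.
have NN_small := natr_mul_expRN4_le R (N * N).
exists (three_sum_tf M lam (lam - mu)) => x i; rewrite tf_output_three_sum_tf.
case: ifP => [/existsP[j1 /existsP[j2 /eqP s_mod0]] | no_triple].
- apply: threshold_low; rewrite !mxE /= mulr1.
  apply: le_trans (blank_weight_le (mu := mu) (p := (j1, j2)) _) _.
    by rewrite /= cos_root_angle_dvd ?mulr1 ?subrK //; apply/eqP.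
  by apply: le_trans NN_small; rewrite ler_peMl ?expR_ge0 // ler1n muln_gt0 N_gt0.
- apply: threshold_high; rewrite !mxE /= mulr1.
  apply: le_trans (blank_weight_ge (mu := mu) _).
    rewrite card_prod card_ord -[X in _ <= X]div1r ler_pdivlMr; last first.
      by rewrite ltr_pwDl ?mulr_ge0 ?expR_ge0.
    by move: NN_small; rewrite -/mu; lra.
  move=> p; set s := (x i + x p.1 + x p.2)%N.
  have s_ndvd : ~~ (M %| s)%N.
    by apply: contraFN no_triple => dvd; apply/existsP; exists p.1; apply/existsP; exists p.2.
  apply: le_trans (ler_wpM2l lam_ge0 (cos_gap _ s_ndvd)) _.
  by rewrite mulrBr mulr1 lam_e; lra.
Qed.
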